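(* For all $n,k\in\mathbb Z$, \[ \binom nk_{a,b;q,p}=\binom{n}{n-k}_{b,a;q,p}\prod_{j=1}^kW_{a,b;q,p}(j,n-k) =(-1)^{n-k}\operatorname{sgn}(n-k)\binom{-k-1}{-n-1}_{a/b,1/b;q,p}\prod_{j=1}^{n-k}W_{a,b;q,p}(n+1-j,j)^{-1} =(-1)^k\operatorname{sgn}(k)\binom{k-n-1}{k}_{1/a,b/a;q,p}\prod_{j=1}^kW_{a,b;q,p}(j,-j). \]
   Context: Let $a,b,q,p\in\mathbb C$ with $|p|<1$, generic so that all theta functions below that appear in denominators are nonzero. $\theta(x;p)=\prod_{j\ge0}(1-p^jx)(1-p^{j+1}/x)$ and $\theta(x_1,\dots,x_\ell;p)=\prod_i\theta(x_i;p)$. $\operatorname{sgn}(n)=1$ for $n\ge0$, $-1$ for $n<0$. Product convention: $\prod_{j=l}^m A_j=A_l\cdots A_m$ if $m>l-1$, $=1$ if $m=l-1$, $=A_{l-1}^{-1}\cdots A_{m+1}^{-1}$ if $m<l-1$. Elliptic weights: $w_{a,b;q,p}(s,t)=\frac{\theta(aq^{s+2t},bq^{2s+t-2},aq^{t-s-1}/b;p)}{\theta(aq^{s+2t-2},bq^{2s+t},aq^{t-s+1}/b;p)}\,q$ and $W_{a,b;q,p}(s,t)=\prod_{j=1}^t w_{a,b;q,p}(s,j)=\frac{\theta(aq^{s+2t},bq^{2s},bq^{2s-1},aq^{1-s}/b,aq^{-s}/b;p)}{\theta(aq^s,bq^{2s+t},bq^{2s+t-1},aq^{1+t-s}/b,aq^{t-s}/b;p)}q^t$.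 The elliptic binomial coefficients $\binom nk_{a,b;q,p}$ ($n,k\in\mathbb Z$) are the unique family with $\binom n0_{a,b;q,p}=\binom nn_{a,b;q,p}=1$ for all $n$ and $\binom{n+1}{k}_{a,b;q,p}=\binom nk_{a,b;q,p}+\binom n{k-1}_{a,b;q,p}W_{a,b;q,p}(k,n+1-k)$ whenever $(n+1,k)\ne(0,0)$; in closed form $\binom nk_{a,b;q,p}=\frac{(q^{1+k},aq^{1+k},bq^{1+k},aq^{1-k}/b;q,p)_{n-k}}{(q,aq,bq^{1+2k},aq/b;q,p)_{n-k}}$ with $(x;q,p)_r=\prod_{i=0}^{r-1}\theta(xq^i;p)$ (product convention) and $(x_1,\dots,x_\ell;q,p)_r=\prod_i(x_i;q,p)_r$. The coefficients with other parameter pairs, e.g. $\binom{\cdot}{\cdot}_{b,a;q,p}$, are defined in the same way with $(a,b)$ replaced accordingly. *)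

From mathcomp Require Import all_boot all_order all_algebra.
From mathcomp Require Import complex.
From mathcomp Require Import all_classical all_reals sequences normedtype.
Import GRing.Theory Num.Theory numFieldNormedType.Exports.

Set Implicit Arguments.
Unset Strict Implicit.
Unset Printing Implicit Defensive.

Local Open Scope ring_scope.

Section EllDefs.
Variable R : realType.
Local Notation C := R[i].

Definition theta_partial (x p : C) (N : nat) : C :=
  \prod_(j < N) ((1 - p ^+ j * x) * (1 - p ^+ j.+1 / x)).

(* theta(x;p) = prod_{j>=0} (1 - p^j x)(1 - p^{j+1}/x), the infinite product
   being the limit of the partial products (limit taken componentwise). *)
Definition theta (x p : C) : C :=
  Complex (limn (fun N => complex.Re (theta_partial x p N)))
          (limn (fun N => complex.Im (theta_partial x p N))).

(* Product convention:  prod_{j=l}^m A_j  =  A_l ... A_m            if m > l-1,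
                                          =  1                       if m = l-1,
                                          =  A_{l-1}^-1 ... A_{m+1}^-1 if m < l-1. *)
Definition zprod (l m : int) (A : int -> C) : C :=
  if (l - 1 <= m)%R then \prod_(i < (absz (m - l + 1)%R)) A (l + Posz (nat_of_ord i))
  else \prod_(i < (absz (l - 1 - m)%R)) (A (m + 1 + Posz (nat_of_ord i)))^-1.

Definition sgn (n : int) : C := if (0 <= n)%R then 1 else -1.

Definition ew (a b q p : C) (s t : int) : C :=
  theta (a * q ^ (s + 2 * t)) p * theta (b * q ^ (2 * s + t - 2)) p
    * theta (a * q ^ (t - s - 1) / b) p
  / (theta (a * q ^ (s + 2 * t - 2)) p * theta (b * q ^ (2 * s + t)) p
     * theta (a * q ^ (t - s + 1) / b) p)
  * q.

Definition eW (a b q p : C) (s t : int) : C := zprod 1 t (fun j => ew a b q p s j).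

Definition is_ebinom (a b q p : C) (B : int -> int -> C) : Prop :=
  (forall n : int, B n 0 = 1) /\
  (forall n : int, B n n = 1) /\
  (forall n k : int, (n + 1, k) <> (0, 0) ->
     B (n + 1) k = B n k + B n (k - 1) * eW a b q p k (n + 1 - k)).

(* Genericity: all theta values that can occur in denominators
   (those of the weights for the four parameter pairs (a,b), (b,a),
   (a/b,1/b), (1/a,b/a), and of the closed form) are nonzero. *)
Definition generic_params (a b q p : C) : Prop :=
  a != 0 /\ b != 0 /\ q != 0 /\
  (forall (m : int) (x : C), x \in [:: a; b; a / b; 1 / a; 1 / b; b / a] ->
     theta (x * q ^ m) p != 0) /\
  (forall m : int, m != 0 -> theta (q ^ m) p != 0).

End EllDefs.
Arguments sgn {R} n.

From mathcomp Require Import all_boot all_order all_algebra.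
From mathcomp Require Import complex.
From mathcomp Require Import all_classical all_reals topology sequences normedtype exp.
From mathcomp Require Import ring lra zify.
Import Order.TTheory GRing.Theory Num.Theory numFieldNormedType.Exports.

Set Implicit Arguments.
Unset Strict Implicit.
Unset Printing Implicit Defensive.

Local Open Scope ring_scope.

(* The three right-hand sides, read as functions of (n, k), satisfy the boundary values
   and the recurrence that characterise the (a, b)-coefficients, so they coincide with them.
   For the first (swap of the parameters, k -> n - k) this rests on the weight identity
   w_{b,a}(s,t) w_{a,b}(t,s) = 1, for the third (reflection (n, k) -> (k - n - 1, k) with
   parameters (1/a, b/a)) on w_{1/a,b/a}(k,t) w_{a,b}(k,1-t-k) = 1.  Both follow from
   theta(1/x) = -theta(x)/x, which holds because the partial products of the two sides
   differ by a geometrically small term.  The second identity is reflection, swap and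
   reflection composed: the resulting product of weights is normalised by evaluating at
   k = n, and sgn(k) sgn(n) may be replaced by sgn(n - k) because the coefficient vanishes
   wherever the two differ. *)

Section RealSequences.
Local Open Scope classical_set_scope.
Variable R : realType.
Implicit Types (u : R ^nat) (K r : R).

Lemma geometric_sum_le r N : 0 <= r < 1 -> \sum_(k < N) r ^+ k <= (1 - r)^-1.
Proof.
move=> /andP[r0 r1]; have := subrX1 r N; have := exprn_ge0 N r0.
by rewrite -div1r ler_pdivlMr ?subr_gt0 //; nra.
Qed.

Lemma cvgn_geometric_increments u K r : 0 <= r < 1 ->
  (forall n, `|u n.+1 - u n| <= K * r ^+ n) -> cvgn u.
Proof.
move=> /andP[r0 r1] du.
have K0 : 0 <= K by have := du 0%N; rewrite expr0 mulr1; apply: le_trans.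
have cvg_series : cvgn (series (telescope u)).
  apply: normed_cvg; apply: (series_le_cvg _ _ du) => [n|n|].
  - exact: normr_ge0.
  - exact: geometric_ge0.
  - by apply: is_cvg_geometric_series; rewrite ger0_norm.
rewrite (_ : u = fun n => u 0%N + series (telescope u) n); last first.
  by apply/funext => n; exact: eq_sum_telescope.
by apply: is_cvgD => //; exact: is_cvg_cst.
Qed.

Lemma cvgn0_le_geometric u K r : `|r| < 1 ->
  (forall n, `|u n| <= K * r ^+ n) -> u @ \oo --> 0.
Proof.
move=> r1 ur; apply/cvgr0Pnorm_lt => e e0.
have geo := cvgr0_norm_lt _ (cvg_geometric K r1) _ e0.
near=> n; apply: le_lt_trans (ur n) (le_lt_trans (ler_norm _) _).
by near: n; exact: geo.
Unshelve. all: by end_near.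
Qed.

End RealSequences.

Section ComplexSequences.
Local Open Scope classical_set_scope.
Variable R : realType.
Local Notation C := R[i].
Local Notation nc := (@Normc.normc R).

Lemma normc_ge0 (z : C) : 0 <= nc z.
Proof. by case: z => a b; exact: sqrtr_ge0. Qed.

Lemma normcX (z : C) n : nc (z ^+ n) = nc z ^+ n.
Proof.
by elim: n => [|n IHn]; rewrite ?expr0 ?Normc.normc1 // !exprS Normc.normcM IHn.
Qed.

Lemma normcD (x y : C) : nc (x + y) <= nc x + nc y.
Proof. exact: le_normcD. Qed.

Lemma normcB (x y : C) : nc (x - y) <= nc x + nc y.
Proof. by rewrite -(normcN y) normcD. Qed.

Lemma normc_Re (z : C) : `|complex.Re z| <= nc z.
Proof.
case: z => a b /=; rewrite -sqrtr_sqr ler_sqrt ?addr_ge0 ?sqr_ge0 //.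
by rewrite lerDl sqr_ge0.
Qed.

Lemma normc_Im (z : C) : `|complex.Im z| <= nc z.
Proof.
case: z => a b /=; rewrite -sqrtr_sqr ler_sqrt ?addr_ge0 ?sqr_ge0 //.
by rewrite lerDr sqr_ge0.
Qed.

Section GeometricIncrements.
Variables (u : nat -> C) (K r : R).
Hypothesis r01 : 0 <= r < 1.
Hypothesis du : forall n, nc (u n.+1 - u n) <= K * r ^+ n.

Lemma cvgn_Re_geometric : cvgn (fun n => complex.Re (u n)).
Proof.
apply: (cvgn_geometric_increments r01) => n; apply: le_trans (du n).
by rewrite (le_trans _ (normc_Re _)) //; case: (u n.+1); case: (u n).
Qed.

Lemma cvgn_Im_geometric : cvgn (fun n => complex.Im (u n)).
Proof.
apply: (cvgn_geometric_increments r01) => n; apply: le_trans (du n).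
by rewrite (le_trans _ (normc_Im _)) //; case: (u n.+1); case: (u n).
Qed.

End GeometricIncrements.

Lemma limn_Complex_affine (u v e : nat -> C) (c : C) :
  cvgn (fun n => complex.Re (v n)) -> cvgn (fun n => complex.Im (v n)) ->
  (fun n => complex.Re (e n)) @ \oo --> 0 -> (fun n => complex.Im (e n)) @ \oo --> 0 ->
  (forall n, u n = c * v n + e n) ->
  Complex (limn (fun n => complex.Re (u n))) (limn (fun n => complex.Im (u n))) =
  c * Complex (limn (fun n => complex.Re (v n))) (limn (fun n => complex.Im (v n))).
Proof.
move=> cRe cIm eRe eIm uE.
have -> : (fun n => complex.Re (u n)) =
    fun n => complex.Re c * complex.Re (v n) - complex.Im c * complex.Im (v n) + complex.Re (e n).
  by apply/funext => n; rewrite uE; case: (c); case: (v n); case: (e n).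
have -> : (fun n => complex.Im (u n)) =
    fun n => complex.Re c * complex.Im (v n) + complex.Im c * complex.Re (v n) + complex.Im (e n).
  by apply/funext => n; rewrite uE; case: (c); case: (v n); case: (e n).
rewrite (cvg_lim _ (cvgD (cvgB (cvgMl_tmp cRe) (cvgMl_tmp cIm)) eRe)) //.
rewrite (cvg_lim _ (cvgD (cvgD (cvgMl_tmp cIm) (cvgMl_tmp cRe)) eIm)) //.
by rewrite !addr0; case: (c).
Qed.

Section ThetaInversion.
Variable p : C.
Hypothesis p_lt1 : nc p < 1.
Local Notation rho := (nc p).
Local Notation tp x N := (theta_partial x p N).

Let rho01 : 0 <= rho < 1. Proof. by rewrite normc_ge0 p_lt1. Qed.

Let rhoS N : rho ^+ N.+1 <= rho ^+ N.
Proof. by rewrite exprSr ler_piMr ?exprn_ge0 ?normc_ge0 // ltW. Qed.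

Lemma theta_partialS x N :
  tp x N.+1 = tp x N * ((1 - p ^+ N * x) * (1 - p ^+ N.+1 / x)).
Proof. exact: big_ord_recr. Qed.

Lemma theta_partial_rel x N : x != 0 ->
  tp x^-1 N * ((1 - x) * (1 - p ^+ N / x)) = tp x N * ((1 - x^-1) * (1 - p ^+ N * x)).
Proof.
move=> x0; elim: N => [|N IHN].
  by rewrite /theta_partial !big_ord0 expr0; ring.
rewrite !theta_partialS invrK.
transitivity (tp x^-1 N * ((1 - x) * (1 - p ^+ N / x)) *
  ((1 - p ^+ N.+1 * x) * (1 - p ^+ N.+1 / x))); first by ring.
by rewrite IHN; ring.
Qed.

Lemma theta_partialV x N : x != 0 ->
  tp x^-1 N = - x^-1 * tp x N + p ^+ N * (tp x N + x^-1 * tp x^-1 N).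
Proof.
move=> x0; have [->|x1] := eqVneq x 1.
  case: N => [|N]; first by rewrite /theta_partial !big_ord0 invr1 expr0; ring.
  by rewrite invr1 /theta_partial big_ord_recl expr0 mulr1 subrr !mul0r; ring.
have x1' : 1 - x != 0 by rewrite subr_eq0 eq_sym.
suff : (1 - x) * (tp x^-1 N - (- x^-1 * tp x N + p ^+ N * (tp x N + x^-1 * tp x^-1 N))) = 0.
  by move/eqP; rewrite mulf_eq0 (negbTE x1') subr_eq0 => /eqP.
rewrite -[RHS](subrr (tp x^-1 N * ((1 - x) * (1 - p ^+ N / x)))).
by rewrite {2}theta_partial_rel //; field.
Qed.

Definition theta_bound (x : C) := expR ((nc x + nc x^-1) / (1 - rho)).

Lemma normc_theta_factor_le x N :
  nc ((1 - p ^+ N * x) * (1 - p ^+ N.+1 / x)) <= expR ((nc x + nc x^-1) * rho ^+ N).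
Proof.
rewrite Normc.normcM mulrDl expRD; apply: ler_pM; rewrite ?normc_ge0 //.
- apply: le_trans (normcB _ _) _; rewrite Normc.normc1 Normc.normcM normcX mulrC.
  exact: expR_ge1Dx.
- apply: le_trans (normcB _ _) (le_trans _ (expR_ge1Dx _)).
  by rewrite Normc.normc1 Normc.normcM normcX lerD2l mulrC ler_wpM2l ?normc_ge0.
Qed.

Lemma normc_theta_partial_le x N : nc (tp x N) <= theta_bound x.
Proof.
suff : nc (tp x N) <= expR ((nc x + nc x^-1) * \sum_(k < N) rho ^+ k).
  move/le_trans; apply; rewrite ler_expR ler_wpM2l ?addr_ge0 ?normc_ge0 //.
  exact: geometric_sum_le.
elim: N => [|N IHN].
  by rewrite /theta_partial !big_ord0 Normc.normc1 mulr0 expR0.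
rewrite theta_partialS Normc.normcM big_ord_recr /= [X in expR X]mulrDr expRD.
by apply: ler_pM; rewrite ?normc_ge0 ?normc_theta_factor_le.
Qed.

Lemma normc_theta_partial_increment x N : nc (tp x N.+1 - tp x N) <=
  theta_bound x * (nc x + nc x^-1 + nc x * nc x^-1) * rho ^+ N.
Proof.
have -> : tp x N.+1 - tp x N = tp x N *
    (- (p ^+ N * x) - p ^+ N.+1 / x + (p ^+ N * x) * (p ^+ N.+1 / x)).
  by rewrite theta_partialS; ring.
rewrite Normc.normcM -[theta_bound x * _ * _]mulrA.
apply: ler_pM; rewrite ?normc_ge0 ?normc_theta_partial_le //.
apply: le_trans (normcD _ _) (le_trans (lerD (normcB _ _) (lexx _)) _).
rewrite normcN !Normc.normcM !normcX.
move: (rhoS N) (exprn_ge0 N (normc_ge0 p)) (exprn_ile1 N.+1 (normc_ge0 p) (ltW p_lt1)).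
move: (normc_ge0 x) (normc_ge0 x^-1) (exprn_ge0 N.+1 (normc_ge0 p)).
move: (rho ^+ N) (rho ^+ N.+1) (nc x) (nc x^-1) => a b X Y X0 Y0 b0 ba a0 b1.
have := mulr_ge0 (mulr_ge0 a0 X0) Y0; nra.
Qed.

Lemma cvgn_Re_theta_partial x : cvgn (fun N => complex.Re (tp x N)).
Proof. exact: (cvgn_Re_geometric rho01 (normc_theta_partial_increment x)). Qed.

Lemma cvgn_Im_theta_partial x : cvgn (fun N => complex.Im (tp x N)).
Proof. exact: (cvgn_Im_geometric rho01 (normc_theta_partial_increment x)). Qed.

Lemma thetaV x : x != 0 -> theta x^-1 p = - x^-1 * theta x p.
Proof.
move=> x0; pose e N := p ^+ N * (tp x N + x^-1 * tp x^-1 N).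
pose E := theta_bound x + nc x^-1 * theta_bound x^-1.
have e_le N : nc (e N) <= E * rho ^+ N.
  rewrite Normc.normcM normcX mulrC ler_wpM2r ?exprn_ge0 ?normc_ge0 //.
  apply: le_trans (normcD _ _) _; rewrite Normc.normcM lerD ?normc_theta_partial_le //.
  by rewrite ler_wpM2l ?normc_ge0 ?normc_theta_partial_le.
have rho1 : `|rho| < 1 by rewrite ger0_norm ?normc_ge0.
rewrite /theta; apply: (@limn_Complex_affine (fun N => tp x^-1 N) (fun N => tp x N) e).
- exact: cvgn_Re_theta_partial.
- exact: cvgn_Im_theta_partial.
- by apply: (cvgn0_le_geometric rho1) => N; exact: le_trans (normc_Re _) (e_le N).
- by apply: (cvgn0_le_geometric rho1) => N; exact: le_trans (normc_Im _) (e_le N).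
- by move=> N; exact: theta_partialV.
Qed.

End ThetaInversion.

End ComplexSequences.

Section IntProducts.
Variable R : realType.
Local Notation C := R[i].
Implicit Types (A B c : int -> C) (m : int).

Lemma mulr_recurrence_eq (F G c : int -> C) : (forall m, c m != 0) ->
  F 0 = G 0 -> (forall m, F m = F (m - 1) * c m) -> (forall m, G m = G (m - 1) * c m) ->
  F =1 G.
Proof.
move=> c_neq0 FG0 Fc Gc; elim/int_ind => // n FGn.
  by rewrite Fc Gc (_ : n.+1%:Z - 1 = n) ?FGn //; lia.
apply: (mulIf (c_neq0 (- n%:Z))).
by rewrite (_ : - n.+1%:Z = - n%:Z - 1) -?Fc -?Gc //; lia.
Qed.

Lemma zprod_nat A (n : nat) : zprod 1 n A = \prod_(i < n) A (1 + i%:Z).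
Proof. by rewrite /zprod subrr lez_nat subrK. Qed.

Lemma zprod_negz A (n : nat) :
  zprod 1 (- n.+1%:Z) A = \prod_(i < n.+1) (A (- n.+1%:Z + 1 + i%:Z))^-1.
Proof.
rewrite /zprod subrr.
by have -> : (0 <= - n.+1%:Z) = false by rewrite oppr_ge0.
Qed.

Lemma zprod0 A : zprod 1 0 A = 1.
Proof. by rewrite (zprod_nat A 0) big_ord0. Qed.

Lemma zprod_recr A : (forall j, A j != 0) ->
  forall m, zprod 1 m A = zprod 1 (m - 1) A * A m.
Proof.
move=> A_neq0 [[|n]|n].
- by rewrite zprod0 sub0r (zprod_negz A 0) big_ord1 /= mulVf.
- rewrite zprod_nat big_ord_recr (_ : n.+1%:Z - 1 = n) ?zprod_nat /=; last by lia.
  by congr (_ * A _); lia.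
- rewrite NegzE (_ : - n.+1%:Z - 1 = - n.+2%:Z) ?zprod_negz; last by lia.
  rewrite [in RHS]big_ord_recl /= (_ : - n.+2%:Z + 1 + 0%:Z = - n.+1%:Z); last by lia.
  rewrite mulrC mulrA mulfV // mul1r.
  by apply: eq_bigr => i _; congr (A _)^-1; rewrite /bump /=; lia.
Qed.

Lemma zprodM A B m :
  zprod 1 m (fun j => A j * B j) = zprod 1 m A * zprod 1 m B.
Proof.
case: m => n; first by rewrite !zprod_nat big_split.
by rewrite NegzE !zprod_negz -big_split; apply: eq_bigr => i _; rewrite invfM.
Qed.

Lemma zprod1 A m : (forall j, A j = 1) -> zprod 1 m A = 1.
Proof.
move=> A1; case: m => n; first by rewrite zprod_nat big1.
by rewrite NegzE zprod_negz big1 // => i _; rewrite A1 invr1.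
Qed.

Lemma eq_zprod A B m : A =1 B -> zprod 1 m A = zprod 1 m B.
Proof. by move=> /boolp.funext ->. Qed.

Lemma zprod_neq0 A m : (forall j, A j != 0) -> zprod 1 m A != 0.
Proof.
move=> A_neq0; case: m => n; rewrite ?NegzE ?zprod_nat ?zprod_negz prodf_seq_neq0.
  by apply/allP => i _; rewrite A_neq0.
by apply/allP => i _; rewrite invr_eq0 A_neq0.
Qed.

Lemma zprod_rev A m u : (forall j, A j != 0) ->
  zprod 1 u (fun j => (A (m + 1 - j))^-1) * zprod 1 m A = zprod 1 (m - u) A.
Proof.
move=> A_neq0; have Ainv_neq0 j : (A (m + 1 - j))^-1 != 0 by rewrite invr_eq0.
move: u; apply: (@mulr_recurrence_eq (fun u => zprod 1 u _ * _)
  (fun u => zprod 1 (m - u) A) _ Ainv_neq0) => /= [|u|u].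
- by rewrite zprod0 mul1r subr0.
- by rewrite (zprod_recr Ainv_neq0) mulrAC.
- rewrite [zprod 1 (m - (u - 1)) A](zprod_recr A_neq0).
  rewrite (_ : m - (u - 1) - 1 = m - u); last by lia.
  by rewrite (_ : m + 1 - u = m - (u - 1)) ?mulfK //; lia.
Qed.

End IntProducts.

Section Signs.
Context {R : realType}.
Local Notation C := R[i].

Definition altsgn (k : int) : C := (-1) ^ k * sgn k.

Lemma sgn_ge0 (k : int) : 0 <= k -> sgn k = 1 :> C.
Proof. by rewrite /sgn => ->. Qed.

Lemma sgn_lt0 (k : int) : k < 0 -> sgn k = -1 :> C.
Proof. by rewrite /sgn leNgt => ->. Qed.

Lemma sgn_opp_sub1 (k : int) : sgn (- k - 1) = - sgn k :> C.
Proof.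
have [k0|k0] := lerP 0 k; first by rewrite (sgn_ge0 k0) sgn_lt0 //; lia.
by rewrite (sgn_lt0 k0) sgn_ge0 ?opprK //; lia.
Qed.

Lemma expN1zD_sub (k n : int) : (-1) ^ k * (-1) ^ n = (-1) ^ (n - k) :> C.
Proof.
have N1_neq0 : (-1 : C) != 0 by rewrite oppr_eq0 oner_eq0.
by rewrite -{1}(subrK k n) expfzDr // mulrC -mulrA -expfzMl mulrNN mulr1 exp1rz mulr1.
Qed.

Lemma altsgn0 : altsgn 0 = 1.
Proof. by rewrite /altsgn sgn_ge0 // mulr1. Qed.

Lemma altsgn_recr m : altsgn m = altsgn (m - 1) * (if m == 0 then 1 else -1).
Proof.
rewrite /altsgn -{1}(subrK 1 m) expfzDr ?oppr_eq0 ?oner_eq0 // expr1z.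
have [->|m0] := eqVneq m 0; first by rewrite sgn_ge0 // sgn_lt0 //; ring.
have [m_ge0|m_lt0] := lerP 0 m.
  by rewrite (sgn_ge0 m_ge0) (sgn_ge0 (k := m - 1)); [ring | lia].
by rewrite (sgn_lt0 m_lt0) (sgn_lt0 (k := m - 1)); [ring | lia].
Qed.

Lemma altsgnK k : altsgn k * altsgn k = 1.
Proof.
rewrite /altsgn mulrACA -expfzMl mulrNN mulr1 exp1rz mul1r.
by have [k0|k0] := lerP 0 k; rewrite ?(sgn_ge0 k0) ?(sgn_lt0 k0) ?mulrNN mulr1.
Qed.

End Signs.

Section EllipticBinomials.
Variable R : realType.
Local Notation C := R[i].
Variables p q : C.
Hypotheses (p_lt1 : Normc.normc p < 1) (q_neq0 : q != 0).
Local Notation T z := (theta z p).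
Local Notation w x y := (ew x y q p).
Local Notation W x y := (eW x y q p).

Definition generic_pair (x y : C) :=
  [/\ x != 0, y != 0, forall m : int, T (x * q ^ m) != 0,
      forall m : int, T (y * q ^ m) != 0 & forall m : int, T (x * q ^ m / y) != 0].

Ltac neq0 := repeat (apply/andP; split); repeat match goal with
  | |- is_true (_ * _ != 0) => apply: mulf_neq0
  | |- is_true (_^-1 != 0) => rewrite invr_eq0
  | |- is_true (- _ != 0) => rewrite oppr_eq0
  | |- is_true (q ^ _ != 0) => exact: expfz_neq0
  | H : forall m : int, is_true (theta (?a * q ^ m) p != 0)
    |- is_true (theta (?a * q ^ _) p != 0) => apply: H
  | H : forall m : int, is_true (theta (?a * q ^ m / ?b) p != 0)
    |- is_true (theta (?a * q ^ _ / ?b) p != 0) => apply: H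
  | _ => assumption
  end.

Lemma thetaV_eq z u : z != 0 -> u = z^-1 -> T u = - u * T z.
Proof. by move=> z_neq0 ->; exact: (thetaV p_lt1). Qed.

(* The shapes in which the inversion is needed: they turn the thetas in the weights for
   the pairs (y, x) and (1/x, y/x) into the thetas controlled by [generic_pair x y]. *)
Section Inversions.
Variables x y : C.
Hypotheses (x_neq0 : x != 0) (y_neq0 : y != 0).
Variable m : int.

Lemma thetaV_ratio : T (y * q ^ m / x) = - (y * q ^ m / x) * T (x * q ^ (- m) / y).
Proof. by apply: thetaV_eq; [neq0 | rewrite -invr_expz; field; neq0]. Qed.

Lemma thetaV_inv : T (x^-1 * q ^ m) = - (x^-1 * q ^ m) * T (x * q ^ (- m)).
Proof. by apply: thetaV_eq; [neq0 | rewrite -invr_expz; field; neq0]. Qed.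

Lemma thetaV_div : T (y / x * q ^ m) = - (y / x * q ^ m) * T (x * q ^ (- m) / y).
Proof. by apply: thetaV_eq; [neq0 | rewrite -invr_expz; field; neq0]. Qed.

Lemma thetaV_invdiv :
  T (x^-1 * q ^ m / (y / x)) = - (x^-1 * q ^ m / (y / x)) * T (y * q ^ (- m)).
Proof. by apply: thetaV_eq; [neq0 | rewrite -invr_expz; field; neq0]. Qed.

End Inversions.

Lemma generic_pair_swap x y : generic_pair x y -> generic_pair y x.
Proof. by case=> x0 y0 hx hy hxy; split => // m; rewrite thetaV_ratio //; neq0. Qed.

Lemma generic_pair_reflect x y : generic_pair x y -> generic_pair x^-1 (y / x).
Proof.
case=> x0 y0 hx hy hxy; split => [||m|m|m]; neq0.
- by rewrite thetaV_inv //; neq0.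
- by rewrite thetaV_div //; neq0.
- by rewrite thetaV_invdiv //; neq0.
Qed.

Lemma eW0 x y s : W x y s 0 = 1.
Proof. exact: zprod0. Qed.

Lemma expqz_sub2 m : q ^ m = q ^ (m - 2) * q * q.
Proof. by rewrite -mulrA (_ : q * q = q ^ 2) // -expfzDr // subrK. Qed.

Section Pair.
Variables x y : C.
Hypothesis gxy : generic_pair x y.

Lemma ew_neq0 s t : w x y s t != 0.
Proof. by case: gxy => *; rewrite /ew; neq0. Qed.

Lemma eW_neq0 s t : W x y s t != 0.
Proof. exact/zprod_neq0/ew_neq0. Qed.

Lemma eW_recr s t : W x y s t = W x y s (t - 1) * w x y s t.
Proof. exact/zprod_recr/ew_neq0. Qed.

Lemma ew_swap s t : w y x s t * w x y t s = 1.
Proof.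
case: gxy => x0 y0 hx hy hxy.
rewrite /ew !(thetaV_ratio x0 y0).
rewrite (_ : s + 2 * t = 2 * t + s); last by lia.
rewrite (_ : 2 * s + t = t + 2 * s); last by lia.
rewrite (_ : - (t - s - 1) = s - t + 1); last by lia.
rewrite (_ : - (t - s + 1) = s - t - 1); last by lia.
rewrite [q ^ (t - s + 1)]expqz_sub2 (_ : t - s + 1 - 2 = t - s - 1); last by lia.
by field; neq0.
Qed.

Lemma ew_reflect k t : w x^-1 (y / x) k t * w x y k (1 - t - k) = 1.
Proof.
case: gxy => x0 y0 hx hy hxy.
rewrite /ew !(thetaV_invdiv x0 y0) !(thetaV_div x0 y0) !(thetaV_inv x0).
rewrite (_ : - (k + 2 * t) = k + 2 * (1 - t - k) - 2); last by lia.
rewrite (_ : - (k + 2 * t - 2) = k + 2 * (1 - t - k)); last by lia.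
rewrite (_ : - (2 * k + t - 2) = (1 - t - k) - k + 1); last by lia.
rewrite (_ : - (2 * k + t) = (1 - t - k) - k - 1); last by lia.
rewrite (_ : - (t - k - 1) = 2 * k + (1 - t - k)); last by lia.
rewrite (_ : - (t - k + 1) = 2 * k + (1 - t - k) - 2); last by lia.
rewrite [q ^ (k + 2 * t)]expqz_sub2 [q ^ (2 * k + t)]expqz_sub2 [q ^ (t - k + 1)]expqz_sub2.
rewrite (_ : t - k + 1 - 2 = t - k - 1); last by lia.
by field; neq0.
Qed.

Lemma eW_swap t k : W y x (t + 1) k * zprod 1 k (fun j => W x y j (t + 1)) =
  zprod 1 k (fun j => W x y j t).
Proof.
rewrite (eq_zprod (B := fun j => W x y j t * w x y j (t + 1))); last first.
  by move=> j; rewrite eW_recr addrK.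
rewrite zprodM /eW mulrCA -zprodM [X in _ * X]zprod1 ?mulr1 // => j.
exact: ew_swap.
Qed.

End Pair.

Lemma eW_reflect x y : generic_pair x y -> forall k m,
  W x^-1 (y / x) k (- m) * W x y k (- k) = W x y k (m - k).
Proof.
move=> gxy k m; have gr := generic_pair_reflect gxy.
move: m; apply: (@mulr_recurrence_eq _ _ _ (fun m => w x y k (m - k))) => [m||m|m].
- exact: ew_neq0.
- by rewrite oppr0 eW0 mul1r sub0r.
- rewrite [W _ _ k (- (m - 1))](eW_recr gr) (_ : - (m - 1) - 1 = - m); last by lia.
  have := ew_reflect gxy k (- (m - 1)).
  rewrite (_ : 1 - - (m - 1) - k = m - k); last by lia.
  by move=> e; rewrite mulrAC -(mulrA (W _ _ k (- m))) e mulr1.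
- by rewrite (eW_recr gxy) (_ : m - k - 1 = m - 1 - k) //; lia.
Qed.

Section Recurrence.
Variables (x y : C) (B : int -> int -> C).
Hypothesis gxy : generic_pair x y.
Hypothesis Brec : forall n k, (n + 1, k) <> (0, 0) ->
  B (n + 1) k = B n k + B n (k - 1) * W x y k (n + 1 - k).

Lemma ebinom_step_eq0 n k : (n + 1, k) <> (0, 0) ->
  B (n + 1) k = B n k -> B n (k - 1) = 0.
Proof.
move=> nk /eqP; rewrite Brec // -subr_eq0 addrAC subrr add0r mulf_eq0.
by rewrite (negbTE (eW_neq0 gxy _ _)) orbF => /eqP.
Qed.

Lemma ebinom_step_eq n k : (n + 1, k) <> (0, 0) ->
  B n (k - 1) = 0 -> B (n + 1) k = B n k.
Proof. by move=> nk Bnk; rewrite Brec // Bnk mul0r addr0. Qed.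

Lemma ebinom_rec_eq0 : (forall n, B n 0 = 0) -> (forall n, B n n = 0) ->
  forall n k, B n k = 0.
Proof.
move=> B0 Bd n [j|j].
  elim: j n => [//|j IHj] n.
  have Bconst : forall m, B m j.+1 = B 0 j.+1.
    apply: (@mulr_recurrence_eq _ _ _ (fun _ => 1)) => // [_|m|m];
      rewrite ?oner_neq0 ?mulr1 //.
    rewrite -{1}(subrK 1 m); apply: ebinom_step_eq; first by case; lia.
    by rewrite (_ : j.+1%:Z - 1 = j) //; lia.
  by rewrite Bconst -(Bconst j.+1) Bd.
rewrite NegzE; elim: j n => [|j IHj] n.
  have [->|n_neq] := eqVneq n (-1); first exact: Bd.
  by apply: (ebinom_step_eq0 (k := 0)); [case; lia | rewrite !B0].
rewrite (_ : - j.+2%:Z = - j.+1%:Z - 1); last by lia.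
by apply: ebinom_step_eq0; [case; lia | rewrite !IHj].
Qed.

End Recurrence.

Section Binomial.
Variables (x y : C) (B : int -> int -> C).
Hypothesis gxy : generic_pair x y.
Hypothesis HB : is_ebinom x y q p B.
Let B0 : forall n, B n 0 = 1 := proj1 HB.
Let Bd : forall n, B n n = 1 := proj1 (proj2 HB).
Let Brec := proj2 (proj2 HB).

Lemma ebinom_colN1 n : n != -1 -> B n (-1) = 0.
Proof.
move=> n_neq; apply: (ebinom_step_eq0 gxy Brec (k := 0)); last by rewrite !B0.
by case; move: n_neq; lia.
Qed.

Lemma ebinom_neg_eq0 N K : K < 0 -> (0 <= N) || (N < K) -> B N K = 0.
Proof.
move=> K_lt0; have [j ->] : exists j : nat, K = - j.+1%:Z by exists (absz K).-1; lia.
elim: j N => [|j IHj] N hN; first by apply: ebinom_colN1; move: hN; lia.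
rewrite (_ : - j.+2%:Z = - j.+1%:Z - 1); last by lia.
apply: (ebinom_step_eq0 gxy Brec); first by case; lia.
by rewrite !IHj //; move: hN; lia.
Qed.

Lemma ebinom_gt_eq0 N K : 0 <= N < K -> B N K = 0.
Proof.
move=> /andP[N_ge0 NK]; have [d ->] : exists d : nat, K = N + d.+1%:Z.
  by exists (absz (K - N - 1)%R); lia.
elim: d N N_ge0 {NK} => [|d IHd] N N_ge0.
  have := Brec (n := N) (k := N + 1) (ltac:(case; lia)).
  rewrite (_ : N + 1 - 1 = N); last by lia.
  rewrite (_ : N + 1 - (N + 1) = 0); last by lia.
  rewrite !Bd eW0 mulr1 => /eqP; rewrite eq_sym -subr_eq0 addrK.
  by move/eqP.
have := Brec (n := N) (k := N + d.+2%:Z) (ltac:(case; lia)).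
rewrite (_ : N + d.+2%:Z - 1 = N + d.+1%:Z) ?IHd ?mul0r ?addr0 //; last by lia.
by rewrite (_ : N + d.+2%:Z = N + 1 + d.+1%:Z) ?IHd //; lia.
Qed.

Lemma ebinom_sgn N K : sgn N * sgn K * B N K = sgn (N - K) * B N K.
Proof.
have [N_ge0|N_lt0] := lerP 0 N; have [K_ge0|K_lt0] := lerP 0 K.
- have [KN|NK] := lerP K N; last by rewrite ebinom_gt_eq0 ?mulr0 ?N_ge0.
  by rewrite (sgn_ge0 N_ge0) (sgn_ge0 K_ge0) sgn_ge0 ?mulr1 // subr_ge0.
- by rewrite ebinom_neg_eq0 ?mulr0 ?N_ge0.
- by rewrite (sgn_lt0 N_lt0) (sgn_ge0 K_ge0) sgn_lt0 ?mulr1 //; lia.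
- have [KN|NK] := lerP K N; last by rewrite ebinom_neg_eq0 ?NK ?orbT ?mulr0.
  by rewrite (sgn_lt0 N_lt0) (sgn_lt0 K_lt0) sgn_ge0 ?subr_ge0 ?mulrNN ?mulr1.
Qed.

Lemma ebinom_row0 k : k != 0 -> B 0 k = 0.
Proof.
move=> k_neq0; have [k_lt0|k_gt0] := ltrP k 0; first by rewrite ebinom_neg_eq0.
by rewrite ebinom_gt_eq0 // lexx lt_neqAle eq_sym k_neq0.
Qed.

Lemma ebinom_rowN1 k : B (-1) k = altsgn k * zprod 1 k (fun j => W x y j (- j)).
Proof.
have c_neq0 m : (if m == 0 then 1 else - W x y m (- m)) != 0.
  by case: ifP => _; rewrite ?oner_neq0 ?oppr_eq0 ?(eW_neq0 gxy).
move: k; apply: (mulr_recurrence_eq c_neq0) => [|m|m].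
- by rewrite B0 altsgn0 zprod0 mulr1.
- have [->|m_neq0] := eqVneq m 0; first by rewrite B0 sub0r Bd mulr1.
  have := Brec (n := -1) (k := m) (ltac:(by case; move: m_neq0; lia)).
  rewrite ebinom_row0 // sub0r mulrN => /eqP.
  by rewrite eq_sym addr_eq0 => /eqP.
- rewrite altsgn_recr (zprod_recr (fun j => eW_neq0 gxy j _)).
  by have [->|_] := eqVneq m 0; rewrite ?oppr0 ?eW0; ring.
Qed.

End Binomial.

Lemma ebinom_uniq x y B1 B2 : generic_pair x y ->
  is_ebinom x y q p B1 -> is_ebinom x y q p B2 -> B1 =2 B2.
Proof.
move=> gxy [B1_0 [B1d B1rec]] [B2_0 [B2d B2rec]] n k; apply/eqP; rewrite -subr_eq0; apply/eqP.
apply: (ebinom_rec_eq0 (B := fun n k => B1 n k - B2 n k) gxy) => [{}n {}k nk||{}n].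
- by rewrite B1rec // B2rec //; ring.
- by move=> {}n; rewrite B1_0 B2_0 subrr.
- by rewrite B1d B2d subrr.
Qed.

Lemma ebinom_swap x y B : generic_pair x y -> is_ebinom y x q p B ->
  is_ebinom x y q p (fun n k => B n (n - k) * zprod 1 k (fun j => W x y j (n - k))).
Proof.
move=> gxy [B0 [Bd Brec]]; split; [|split].
- by move=> n; rewrite subr0 Bd zprod0 mulr1.
- by move=> n; rewrite subrr B0 mul1r zprod1 // => j; exact: eW0.
move=> n k nk /=.
have := Brec n (n + 1 - k) (ltac:(case=> ? ?; apply: nk; congr pair; lia)).
rewrite (_ : n + 1 - k - 1 = n - k); last by lia.
rewrite (_ : n + 1 - (n + 1 - k) = k); last by lia.
move=> ->; rewrite (_ : n - (k - 1) = n - k + 1); last by lia.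
rewrite (_ : n + 1 - k = n - k + 1); last by lia.
rewrite -(eW_swap gxy (n - k) k) (zprod_recr (fun j => eW_neq0 gxy j (n - k + 1)) k).
ring.
Qed.

Lemma ebinom_reflect x y B : generic_pair x y -> is_ebinom x^-1 (y / x) q p B ->
  is_ebinom x y q p (fun n k => altsgn k * B (k - n - 1) k * zprod 1 k (fun j => W x y j (- j))).
Proof.
move=> gxy HB; have gr := generic_pair_reflect gxy.
have [B0 [Bd Brec]] := HB; split; [|split].
- by move=> n; rewrite B0 zprod0 altsgn0 !mulr1.
- move=> n; rewrite subrr sub0r (ebinom_rowN1 gr HB) mulrA altsgnK mul1r -zprodM.
  by rewrite zprod1 // => j; rewrite (eW_reflect gxy j j) subrr eW0.
move=> n k nk /=.
have [k0|k_neq0] := eqVneq k 0.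
  subst k; rewrite !B0 sub0r (ebinom_colN1 gr HB) ?mulr0 ?mul0r ?addr0 //.
  by apply/eqP => e; apply: nk; congr pair; lia.
have := Brec (k - n - 2) k (ltac:(by case; move: k_neq0; lia)).
rewrite (_ : k - n - 2 + 1 - k = - (n + 1)); last by lia.
rewrite (_ : k - n - 2 + 1 = k - n - 1); last by lia.
move=> ->; rewrite (_ : k - (n + 1) - 1 = k - n - 2); last by lia.
rewrite (_ : k - 1 - n - 1 = k - n - 2); last by lia.
rewrite (altsgn_recr k) (negbTE k_neq0) (zprod_recr (fun j => eW_neq0 gxy j _) k).
rewrite -(eW_reflect gxy k (n + 1)).
ring.
Qed.

(* Reflect, swap, reflect: (a, b) <- (1/a, b/a) <- (b/a, 1/a) <- (a/b, 1/b). *)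
Lemma ebinom_reflect_twice a b Bab B3 n : generic_pair a b ->
  is_ebinom a b q p Bab -> is_ebinom (a / b) b^-1 q p B3 ->
  exists c, forall k, Bab n k =
    c * altsgn k * B3 (- k - 1) (- n - 1) * zprod 1 k (fun j => W a b j (n + 1 - j)).
Proof.
move=> gab hab h3; have [a0 b0 _ _ _] := gab.
have gr := generic_pair_reflect gab; have gr' := generic_pair_swap gr.
have h3' : is_ebinom (b / a)^-1 (a^-1 / (b / a)) q p B3.
  by rewrite (_ : a^-1 / (b / a) = b^-1) ?invf_div //; field; rewrite a0 b0.
have E := ebinom_uniq gab hab (ebinom_reflect gab (ebinom_swap gr (ebinom_reflect gr' h3'))).
exists (altsgn (- n - 1) * zprod 1 (- n - 1) (fun j => W (b / a) a^-1 j (- j))) => k.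
rewrite E /= (_ : k - n - 1 - k = - n - 1); last by lia.
rewrite (_ : - n - 1 - (k - n - 1) - 1 = - k - 1); last by lia.
rewrite [zprod 1 k (fun j => W a b j (n + 1 - j))](eq_zprod
  (B := fun j => W a^-1 (b / a) j (- n - 1) * W a b j (- j))); last first.
  by move=> j; rewrite (_ : - n - 1 = - (n + 1)) ?(eW_reflect gab) //; lia.
rewrite zprodM; ring.
Qed.

Lemma ebinom_negate a b Bab B3 : generic_pair a b ->
  is_ebinom a b q p Bab -> is_ebinom (a / b) b^-1 q p B3 -> forall n k,
  Bab n k = altsgn (n - k) * B3 (- k - 1) (- n - 1)
              * zprod 1 (n - k) (fun j => (W a b (n + 1 - j) j)^-1).
Proof.
move=> gab hab h3 n k.
have gb : generic_pair (a / b) b^-1.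
  exact/generic_pair_swap/generic_pair_reflect/generic_pair_swap.
have [c Bc] := ebinom_reflect_twice n gab hab h3.
(* Both sides are 1 on the diagonal, which determines [c]. *)
have cPn : c * altsgn n * zprod 1 n (fun j => W a b j (n + 1 - j)) = 1.
  by have := Bc n; rewrite hab.2.1 h3.2.1 mulr1 => ->.
have Pk : zprod 1 k (fun j => W a b j (n + 1 - j)) =
    zprod 1 (n - k) (fun j => (W a b (n + 1 - j) j)^-1) * zprod 1 n (fun j => W a b j (n + 1 - j)).
  have := zprod_rev n (n - k) (fun j => eW_neq0 gab j (n + 1 - j)).
  rewrite (_ : n - (n - k) = k); last by lia.
  move=> <-; congr (_ * _); apply: eq_zprod => j /=.
  by rewrite (_ : n + 1 - (n + 1 - j) = j) //; lia.
have sgnB3 : altsgn k * altsgn n * B3 (- k - 1) (- n - 1)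
             = altsgn (n - k) * B3 (- k - 1) (- n - 1).
  have := ebinom_sgn gb h3 (- k - 1) (- n - 1).
  rewrite !sgn_opp_sub1 mulrNN (_ : - k - 1 - (- n - 1) = n - k); last by lia.
  by rewrite /altsgn mulrACA expN1zD_sub -!mulrA => ->.
rewrite Bc Pk -sgnB3 -[c]mulr1 -(altsgnK n).
set X := B3 _ _; set Y := zprod 1 (n - k) _; set Pn := zprod 1 n _.
transitivity ((c * altsgn n * Pn) * (altsgn k * altsgn n * X) * Y); first by ring.
by rewrite cPn mul1r.
Qed.

End EllipticBinomials.

Theorem corollary3 (R : realType) (a b q p : R[i])
  (hp : `|p| < 1) (hgen : generic_params a b q p)
  (Bab Bba B3 B4 : int -> int -> R[i])
  (hab : is_ebinom a b q p Bab)
  (hba : is_ebinom b a q p Bba)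
  (h3 : is_ebinom (a / b) (1 / b) q p B3)
  (h4 : is_ebinom (1 / a) (b / a) q p B4) :
  forall n k : int,
    Bab n k = Bba n (n - k) * zprod 1 k (fun j => eW a b q p j (n - k)) /\
    Bab n k = (-1) ^ (n - k) * sgn (n - k) * B3 (- k - 1) (- n - 1)
                * zprod 1 (n - k) (fun j => (eW a b q p (n + 1 - j) j)^-1) /\
    Bab n k = (-1) ^ k * sgn k * B4 (k - n - 1) k
                * zprod 1 k (fun j => eW a b q p j (- j)).
Proof.
have [a_neq0 [b_neq0 [q_neq0 [theta_neq0 _]]]] := hgen.
have p_lt1 : Normc.normc p < 1.
  by move: hp; rewrite normc_def ltcE /= => /andP[]; case: (p).
have gab : generic_pair p q a b.
  split=> // m; first by apply: theta_neq0; rewrite !inE eqxx.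
    by apply: theta_neq0; rewrite !inE eqxx ?orbT.
  by rewrite mulrAC; apply: theta_neq0; rewrite !inE eqxx ?orbT.
rewrite !div1r in h3 h4 => n k; split; [|split].
- exact: (ebinom_uniq p_lt1 q_neq0 gab hab (ebinom_swap p_lt1 q_neq0 gab hba)).
- exact: (ebinom_negate p_lt1 q_neq0 gab hab h3).
- exact: (ebinom_uniq p_lt1 q_neq0 gab hab (ebinom_reflect p_lt1 q_neq0 gab h4)).
Qed.
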